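(* Let $s_1,\dots,s_M\in\mathbb{R}^2_-$ be distinct points. The functions $g_l$ and $h_{l,q}$, $l=1,\dots,M$, $q=1,2$, defined on $\widehat{\mathbb{S}}$ by $g_l(\alpha)=Q(\alpha)\mathrm{e}^{-\mathrm{i}k_-\mathrm{v}(\alpha)\cdot s_l}$ and $h_{l,q}(\alpha)=(\mathbf{e}_q\cdot\mathrm{v}(\alpha))Q(\alpha)\mathrm{e}^{-\mathrm{i}k_-\mathrm{v}(\alpha)\cdot s_l}$, are linearly independent.
   Context: $k_\pm>0$ are the wavenumbers of the upper and lower half-planes $\mathbb{R}^2_\pm=\{\pm x_2>0\}$. $\theta_c=\arccos(k_-/k_+)$ if $k_+>k_-$ and $\theta_c=0$ if $k_+<k_-$; $\widehat{\mathbb{S}}=\{(\cos\theta,\sin\theta):\theta\in(\pi+\theta_c,2\pi-\theta_c)\}$. With $\mu=k_+/k_-$ and $\alpha=(\alpha_1,\alpha_2)$: $\mathrm{v}(\alpha)=(\mu\alpha_1,\mathrm{sign}(\alpha_2)\sqrt{1-\mu^2\alpha_1^2})$, $Q(\alpha)=\frac{2\mu\alpha_2}{\mu\alpha_2+\mathrm{v}_2(\alpha)}$. $\mathbf{e}_1,\mathbf{e}_2$ is the standard basis of $\mathbb{R}^2$. The points $s_l$ are the centers of well-separated particles, hence distinct. *)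

From Stdlib Require Import Reals Lra List.
From Coquelicot Require Import Coquelicot.
Open Scope R_scope.

Definition cexpi (x : R) : C := (cos x, sin x).

Definition sgn (x : R) : R :=
  if Rlt_dec 0 x then 1 else if Rlt_dec x 0 then -1 else 0.

Definition theta_c (kp km : R) : R :=
  if Rlt_dec km kp then acos (km / kp) else 0.

Definition Shat (kp km : R) (a : R * R) : Prop :=
  exists t : R, PI + theta_c kp km < t < 2 * PI - theta_c kp km /\
                a = (cos t, sin t).

Definition mu (kp km : R) : R := kp / km.

Definition vv (kp km : R) (a : R * R) : R * R :=
  (mu kp km * fst a,
   sgn (snd a) * sqrt (1 - (mu kp km) ^ 2 * (fst a) ^ 2)).

Definition QQ (kp km : R) (a : R * R) : R :=
  2 * mu kp km * snd a / (mu kp km * snd a + snd (vv kp km a)).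

Definition dot2 (x y : R * R) : R := fst x * fst y + snd x * snd y.

Definition g_fun (kp km : R) (sl : R * R) (a : R * R) : C :=
  Cmult (RtoC (QQ kp km a)) (cexpi (- (km * dot2 (vv kp km a) sl))).

Definition e_q (q : nat) : R * R := if Nat.eqb q 1 then (1, 0) else (0, 1).

Definition h_fun (kp km : R) (sl : R * R) (q : nat) (a : R * R) : C :=
  Cmult (RtoC (dot2 (e_q q) (vv kp km a))) (g_fun kp km sl a).

Definition Csum (M : nat) (f : nat -> C) : C :=
  fold_right Cplus (RtoC 0) (map f (seq 0 M)).

From Stdlib Require Import Reals Lra Lia List ZArith Classical.
From Coquelicot Require Import Coquelicot.
Open Scope R_scope.

(* For x near 3pi/2 there is alpha in Shat with v(alpha) = (cos x, sin x) and
   Q(alpha) <> 0, so a vanishing combination yields, on an interval,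
     sum_l P_l(x) e^{-i k_- s_l . (cos x, sin x)} = 0,
   where P_l(x) = c_l + d_{1,l} cos x + d_{2,l} sin x is a trigonometric polynomial.
   Such a sum over distinct points s_l has only zero polynomials.  Multiply by
   e^{i k_- s_1 . (cos x, sin x)} and apply d/dx - i h, with h the top frequency of
   P_1: this shrinks the frequency range of P_1, while every other term keeps its
   shape with a polynomial that is nonzero whenever P_l is, because the top
   coefficient of P_l gets multiplied by k_- (d_1 - i d_2) / 2 <> 0, d = s_l - s_1.
   Induct on the frequency range of P_1, then on the number of points. *)

Definition is_derive_C (F : R -> C) (x : R) (l : C) : Prop :=
  is_derive (fun t => fst (F t)) x (fst l) /\ is_derive (fun t => snd (F t)) x (snd l).

Lemma is_derive_C_ext (F G : R -> C) x l l' :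
  (forall t, F t = G t) -> l = l' -> is_derive_C F x l -> is_derive_C G x l'.
Proof.
  intros HFG <- [H1 H2]; split; eapply is_derive_ext; try eassumption; intro t; simpl; now rewrite HFG.
Qed.

Lemma is_derive_C_const (z : C) x : is_derive_C (fun _ => z) x (RtoC 0).
Proof. split; cbn; auto_derive; auto. Qed.

Lemma is_derive_C_plus (F G : R -> C) x lF lG :
  is_derive_C F x lF -> is_derive_C G x lG ->
  is_derive_C (fun t => Cplus (F t) (G t)) x (Cplus lF lG).
Proof. intros [H1 H2] [H3 H4]; split; now apply @is_derive_plus. Qed.

Lemma is_derive_C_scal_cexpi (z : C) (psi : R -> R) x dpsi :
  is_derive psi x dpsi ->
  is_derive_C (fun t => Cmult z (cexpi (psi t))) x
    (Cmult z (Cmult Ci (Cmult (RtoC dpsi) (cexpi (psi x))))).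
Proof.
  intros Hpsi.
  assert (Hex : ex_derive psi x) by now exists dpsi.
  assert (HD : Derive (fun t => psi t) x = dpsi) by exact (is_derive_unique _ _ _ Hpsi).
  destruct z as [z1 z2]. unfold cexpi.
  split; cbn; auto_derive; try tauto; rewrite HD; ring.
Qed.

Lemma is_derive_locally_zero (f : R -> R) x l :
  locally x (fun t => f t = 0) -> is_derive f x l -> l = 0.
Proof.
  intros Hf Hd.
  assert (H0 : is_derive f x 0).
  { apply (is_derive_ext_loc (fun _ => 0)).
    - eapply filter_imp; [|exact Hf]. now intros t ->.
    - exact (is_derive_const (K := R_AbsRing) (V := R_NormedModule) 0 x). }
  apply is_derive_unique in Hd, H0. congruence.
Qed.

Lemma is_derive_C_interval_zero (F : R -> C) a b x l :
  (forall t, a < t < b -> F t = RtoC 0) -> a < x < b -> is_derive_C F x l -> l = RtoC 0.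
Proof.
  intros HF Hx [H1 H2].
  assert (Hloc : locally x (fun t => F t = RtoC 0)).
  { apply (locally_open (fun t => a < t /\ t < b)); auto.
    apply open_and; [apply open_gt | apply open_lt]. }
  apply injective_projections; simpl;
    [eapply is_derive_locally_zero, H1 | eapply is_derive_locally_zero, H2];
    eapply filter_imp; try exact Hloc; now intros t ->.
Qed.

Lemma cexpi_add a b : cexpi (a + b) = Cmult (cexpi a) (cexpi b).
Proof. unfold cexpi. rewrite cos_plus, sin_plus. apply injective_projections; simpl; ring. Qed.

Lemma cexpi_neq0 a : cexpi a <> RtoC 0.
Proof.
  intros E. apply (f_equal fst) in E as E1; apply (f_equal snd) in E as E2; simpl in E1, E2.
  pose proof (sin2_cos2 a) as H. rewrite E1, E2 in H. unfold Rsqr in H. lra.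
Qed.

Lemma Cmult_eq0_r (z w : C) : z <> RtoC 0 -> Cmult z w = RtoC 0 -> w = RtoC 0.
Proof. intros Hz Hzw. apply NNPP. intros Hw. exact (Cmult_neq_0 z w Hz Hw Hzw). Qed.

(* [sum_j z_j e^{ijx}] as a list of pairs [(j, z_j)]; a frequency may occur several times. *)
Definition tpoly := list (Z * C).

Fixpoint tp_eval (P : tpoly) (x : R) : C :=
  match P with
  | nil => RtoC 0
  | (j, z) :: P' => Cplus (Cmult z (cexpi (IZR j * x))) (tp_eval P' x)
  end.

Fixpoint tp_coef (P : tpoly) (i : Z) : C :=
  match P with
  | nil => RtoC 0
  | (j, z) :: P' => Cplus (if Z.eq_dec j i then z else RtoC 0) (tp_coef P' i)
  end.

Definition tp_zero (P : tpoly) : Prop := forall j, tp_coef P j = RtoC 0.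

Definition tp_drop (i : Z) (P : tpoly) : tpoly := filter (fun p => negb (Z.eqb (fst p) i)) P.

Lemma tp_eval_drop P i x :
  tp_eval P x = Cplus (Cmult (tp_coef P i) (cexpi (IZR i * x))) (tp_eval (tp_drop i P) x).
Proof.
  induction P as [|[j z] P IH]; simpl.
  - apply injective_projections; simpl; ring.
  - rewrite IH. destruct (Z.eq_dec j i) as [<-|Hji].
    + rewrite Z.eqb_refl; simpl. ring.
    + apply Z.eqb_neq in Hji. rewrite Hji; simpl. ring.
Qed.

Lemma tp_coef_drop P i j :
  tp_coef (tp_drop i P) j = if Z.eq_dec j i then RtoC 0 else tp_coef P j.
Proof.
  induction P as [|[l z] P IH]; simpl.
  - now destruct (Z.eq_dec j i).
  - destruct (Z.eqb_spec l i) as [->|Hli]; simpl; rewrite IH.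
    + destruct (Z.eq_dec j i), (Z.eq_dec i j); try lia; ring.
    + destruct (Z.eq_dec j i), (Z.eq_dec l j); try lia; ring.
Qed.

Lemma tp_eval_zero P x : tp_zero P -> tp_eval P x = RtoC 0.
Proof.
  induction P as [P IH] using (induction_ltof1 _ (@length _)).
  destruct P as [|[j z] P']; intros HP; [reflexivity|].
  rewrite (tp_eval_drop _ j), HP, IH.
  - apply injective_projections; simpl; ring.
  - unfold ltof, tp_drop; simpl. rewrite Z.eqb_refl; simpl.
    pose proof (filter_length_le (fun p => negb (Z.eqb (fst p) j)) P'). lia.
  - intro i. rewrite tp_coef_drop. destruct (Z.eq_dec i j); auto.
Qed.

Lemma tp_eval_monomial P h x :
  (forall j, j <> h -> tp_coef P j = RtoC 0) ->
  tp_eval P x = Cmult (tp_coef P h) (cexpi (IZR h * x)).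
Proof.
  intros HP. rewrite (tp_eval_drop _ h), tp_eval_zero.
  - apply injective_projections; simpl; ring.
  - intro j. rewrite tp_coef_drop. destruct (Z.eq_dec j h); auto.
Qed.

Definition tp_supported (P : tpoly) (lo : Z) (n : nat) : Prop :=
  forall j, tp_coef P j <> RtoC 0 -> (lo <= j < lo + Z.of_nat n)%Z.

Lemma tp_coef_nonzero_in P j : tp_coef P j <> RtoC 0 -> In j (map fst P).
Proof.
  induction P as [|[i z] P IH]; simpl; intros Hj; [now contradiction Hj|].
  destruct (Z.eq_dec i j); [now left|right; apply IH].
  intros E; apply Hj; rewrite E. apply injective_projections; simpl; ring.
Qed.

Lemma Z_list_bounded (l : list Z) : exists lo hi, forall j, In j l -> (lo <= j <= hi)%Z.
Proof.
  induction l as [|i l (lo & hi & IH)].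
  - now exists 0%Z, 0%Z.
  - exists (Z.min i lo), (Z.max i hi). intros j [<-|Hj]; [lia|]. specialize (IH j Hj); lia.
Qed.

Lemma tp_supported_exists P : exists lo n, tp_supported P lo n.
Proof.
  destruct (Z_list_bounded (map fst P)) as (lo & hi & H).
  exists lo, (Z.to_nat (hi - lo + 1)). intros j Hj.
  specialize (H j (tp_coef_nonzero_in _ _ Hj)). lia.
Qed.

Lemma tp_supported_0 P lo : tp_supported P lo 0 -> tp_zero P.
Proof.
  intros HP j. apply NNPP. intros Hj. specialize (HP j Hj). lia.
Qed.

Lemma tp_top_coef P lo n :
  tp_supported P lo n -> ~ tp_zero P ->
  exists m, tp_coef P m <> RtoC 0 /\ forall j, (m < j)%Z -> tp_coef P j = RtoC 0.
Proof.
  revert P. induction n as [|n IH]; intros P HP Hnz.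
  - now contradiction Hnz; apply (tp_supported_0 _ lo).
  - destruct (classic (tp_coef P (lo + Z.of_nat n) = RtoC 0)) as [Htop|Htop].
    + apply (IH P); auto. intros j Hj. specialize (HP j Hj).
      assert (j <> lo + Z.of_nat n)%Z by (intros ->; contradiction). lia.
    + exists (lo + Z.of_nat n)%Z. split; auto.
      intros j Hj. apply NNPP. intros Hj'. specialize (HP j Hj'). lia.
Qed.

Lemma tp_monomial_zero P h x :
  (forall j, j <> h -> tp_coef P j = RtoC 0) -> tp_eval P x = RtoC 0 -> tp_zero P.
Proof.
  intros HP Hx j. destruct (Z.eq_dec j h) as [->|Hjh]; auto.
  rewrite (tp_eval_monomial _ h) in Hx by exact HP.
  rewrite Cmult_comm in Hx. exact (Cmult_eq0_r _ _ (cexpi_neq0 _) Hx).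
Qed.

Definition phase (k : R) (s : R * R) (x : R) : R := - (k * dot2 (cos x, sin x) s).

(* [up_coef k d] and [down_coef k d] are the coefficients of [e^{ix}] and [e^{-ix}] in
   [i * (d/dx) phase k d x], so that
   [(d/dx - i h) (P(x) e^{i phase k d x}) = (tp_dstep k d h P)(x) e^{i phase k d x}]. *)
Definition up_coef (k : R) (d : R * R) : C := (k * fst d / 2, - (k * snd d) / 2).
Definition down_coef (k : R) (d : R * R) : C := (- (k * fst d) / 2, - (k * snd d) / 2).

Fixpoint tp_dstep (k : R) (d : R * R) (h : Z) (P : tpoly) : tpoly :=
  match P with
  | nil => nil
  | (j, z) :: P' =>
      (j, Cmult (Cmult Ci (RtoC (IZR j - IZR h))) z)
      :: ((j + 1)%Z, Cmult (up_coef k d) z)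
      :: ((j - 1)%Z, Cmult (down_coef k d) z) :: tp_dstep k d h P'
  end.

Lemma tp_coef_dstep k d h P j :
  tp_coef (tp_dstep k d h P) j =
  Cplus (Cmult (Cmult Ci (RtoC (IZR j - IZR h))) (tp_coef P j))
    (Cplus (Cmult (up_coef k d) (tp_coef P (j - 1))) (Cmult (down_coef k d) (tp_coef P (j + 1)))).
Proof.
  induction P as [|[i z] P IH]; simpl.
  - apply injective_projections; simpl; ring.
  - rewrite IH.
    destruct (Z.eq_dec i j), (Z.eq_dec (i + 1) j), (Z.eq_dec (i - 1) j),
      (Z.eq_dec i (j - 1)), (Z.eq_dec i (j + 1)); try lia; subst; ring.
Qed.

Lemma tp_coef_dstep_origin k h P j :
  tp_coef (tp_dstep k (0, 0) h P) j = Cmult (Cmult Ci (RtoC (IZR j - IZR h))) (tp_coef P j).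
Proof.
  rewrite tp_coef_dstep. unfold up_coef, down_coef; simpl.
  apply injective_projections; simpl; field.
Qed.

Lemma Ci_mult_IZR_neq0 j : j <> 0%Z -> Cmult Ci (RtoC (IZR j)) <> RtoC 0.
Proof.
  intros Hj E. apply (f_equal snd) in E. simpl in E. apply Hj, eq_IZR. lra.
Qed.

Lemma tp_dstep_origin_supported k lo n P :
  tp_supported P lo (S n) -> tp_supported (tp_dstep k (0, 0) (lo + Z.of_nat n) P) lo n.
Proof.
  intros HP j Hj. rewrite tp_coef_dstep_origin, <- minus_IZR in Hj.
  destruct (Z.eq_dec j (lo + Z.of_nat n)) as [->|Hjn].
  - rewrite Z.sub_diag in Hj. contradiction Hj. apply injective_projections; simpl; ring.
  - assert (Hc : tp_coef P j <> RtoC 0).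
    { intros E; apply Hj; rewrite E. apply injective_projections; simpl; ring. }
    specialize (HP j Hc). lia.
Qed.

Lemma tp_dstep_origin_zero k h P :
  tp_zero (tp_dstep k (0, 0) h P) -> forall j, j <> h -> tp_coef P j = RtoC 0.
Proof.
  intros Hz j Hj. specialize (Hz j). rewrite tp_coef_dstep_origin, <- minus_IZR in Hz.
  apply NNPP; intros Hc.
  exact (Cmult_neq_0 _ _ (Ci_mult_IZR_neq0 (j - h) ltac:(lia)) Hc Hz).
Qed.

Lemma up_coef_neq0 k d : 0 < k -> d <> (0, 0) -> up_coef k d <> RtoC 0.
Proof.
  intros Hk Hd E. apply Hd. destruct d as [d1 d2]. unfold up_coef in E.
  apply (f_equal fst) in E as E1; apply (f_equal snd) in E as E2; simpl in E1, E2.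
  f_equal; nra.
Qed.

Lemma tp_dstep_nonzero k d h P :
  0 < k -> d <> (0, 0) -> ~ tp_zero P -> ~ tp_zero (tp_dstep k d h P).
Proof.
  intros Hk Hd HP Hz.
  destruct (tp_supported_exists P) as (lo & n & Hs).
  destruct (tp_top_coef P lo n Hs HP) as (m & Hm & Habove).
  specialize (Hz (m + 1)%Z).
  rewrite tp_coef_dstep, Z.add_simpl_r, (Habove (m + 1)%Z), (Habove (m + 1 + 1)%Z) in Hz by lia.
  apply (Cmult_neq_0 _ _ (up_coef_neq0 k d Hk Hd) Hm).
  rewrite <- Hz. apply injective_projections; simpl; ring.
Qed.

Lemma is_derive_phase k d x :
  is_derive (phase k d) x (k * (fst d * sin x - snd d * cos x)).
Proof. unfold phase, dot2; simpl. auto_derive; auto. ring. Qed.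

Definition wave (k : R) (p : tpoly * (R * R)) (x : R) : C :=
  Cmult (tp_eval (fst p) x) (cexpi (phase k (snd p) x)).

Definition wave_sum (k : R) (L : list (tpoly * (R * R))) (x : R) : C :=
  fold_right Cplus (RtoC 0) (map (fun p => wave k p x) L).

Definition dstep (k : R) (h : Z) (p : tpoly * (R * R)) : tpoly * (R * R) :=
  (tp_dstep k (snd p) h (fst p), snd p).

Lemma is_derive_C_wave k h p x :
  is_derive_C (wave k p) x
    (Cplus (wave k (dstep k h p) x) (Cmult (Cmult Ci (RtoC (IZR h))) (wave k p x))).
Proof.
  destruct p as [P d]. unfold wave, dstep; simpl.
  induction P as [|[j z] P IH]; simpl.
  - apply (is_derive_C_ext (fun _ => RtoC 0) _ _ (RtoC 0)); [| |apply is_derive_C_const];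
      [intros t|]; apply injective_projections; simpl; ring.
  - assert (Hpsi : is_derive (fun t => IZR j * t + phase k d t) x
                     (IZR j + k * (fst d * sin x - snd d * cos x))).
    { apply (is_derive_plus (fun t => IZR j * t)); [|apply is_derive_phase].
      auto_derive; auto; ring. }
    eapply is_derive_C_ext;
      [| |exact (is_derive_C_plus _ _ x _ _ (is_derive_C_scal_cexpi z _ x _ Hpsi) IH)].
    + intros t; cbv beta. rewrite cexpi_add. ring.
    + cbv beta. rewrite !cexpi_add, !plus_IZR, !minus_IZR.
      replace ((IZR j + IZR 1) * x) with (IZR j * x + x) by (simpl; ring).
      replace ((IZR j - IZR 1) * x) with (IZR j * x + - x) by (simpl; ring).
      rewrite !cexpi_add. unfold up_coef, down_coef, cexpi.
      rewrite cos_neg, sin_neg.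
      destruct z as [z1 z2], (tp_eval P x) as [e1 e2], (tp_eval (tp_dstep k d h P) x) as [g1 g2].
      apply injective_projections; simpl; field.
Qed.

Lemma is_derive_C_wave_sum k h L x :
  is_derive_C (wave_sum k L) x
    (Cplus (wave_sum k (map (dstep k h) L) x) (Cmult (Cmult Ci (RtoC (IZR h))) (wave_sum k L x))).
Proof.
  induction L as [|p L IH].
  - apply (is_derive_C_ext (fun _ => RtoC 0) _ _ (RtoC 0)); [| |apply is_derive_C_const];
      [intros t|]; unfold wave_sum; simpl; apply injective_projections; simpl; ring.
  - eapply is_derive_C_ext; [| |exact (is_derive_C_plus _ _ x _ _ (is_derive_C_wave k h p x) IH)].
    + reflexivity.
    + unfold wave_sum; simpl. ring.
Qed.

Lemma wave_sum_Forall_zero k L x :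
  List.Forall (fun p => tp_zero (fst p)) L -> wave_sum k L x = RtoC 0.
Proof.
  intros HL. induction HL as [|p L Hp _ IH]; [reflexivity|].
  unfold wave_sum in *; simpl. rewrite IH. unfold wave. rewrite (tp_eval_zero _ x Hp).
  apply injective_projections; simpl; ring.
Qed.

Definition vsub (s s1 : R * R) : R * R := (fst s - fst s1, snd s - snd s1).

Lemma vsub_diag s : vsub s s = (0, 0).
Proof. unfold vsub. f_equal; ring. Qed.

Lemma vsub_eq0 s s1 : vsub s s1 = (0, 0) -> s = s1.
Proof.
  destruct s as [u v], s1 as [u1 v1]. unfold vsub; simpl. intros E. injection E as E1 E2.
  f_equal; lra.
Qed.

Lemma phase_vsub k s s1 x : phase k s x = phase k s1 x + phase k (vsub s s1) x.
Proof. unfold phase, vsub, dot2; simpl. ring. Qed.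

Definition recentre (s1 : R * R) (p : tpoly * (R * R)) : tpoly * (R * R) :=
  (fst p, vsub (snd p) s1).

Lemma wave_sum_recentre k s1 L x :
  wave_sum k L x = Cmult (cexpi (phase k s1 x)) (wave_sum k (map (recentre s1) L) x).
Proof.
  unfold wave_sum. induction L as [|p L IH]; simpl.
  - apply injective_projections; simpl; ring.
  - rewrite IH. unfold wave. simpl. rewrite (phase_vsub k (snd p) s1), cexpi_add. ring.
Qed.

Definition dstep_from (k : R) (s1 : R * R) (h : Z) (p : tpoly * (R * R)) : tpoly * (R * R) :=
  (tp_dstep k (vsub (snd p) s1) h (fst p), snd p).

Section Vanishing.

Variables (k a b : R).
Hypotheses (Hk : 0 < k) (Hab : a < b).

Definition wave_sum_vanishes (L : list (tpoly * (R * R))) : Prop :=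
  forall x, a < x < b -> wave_sum k L x = RtoC 0.

Lemma wave_sum_vanishes_dstep_from s1 h L :
  wave_sum_vanishes L -> wave_sum_vanishes (map (dstep_from k s1 h) L).
Proof.
  intros HL x Hx.
  set (L0 := map (recentre s1) L).
  assert (HL0 : forall t, a < t < b -> wave_sum k L0 t = RtoC 0).
  { intros t Ht. apply (Cmult_eq0_r (cexpi (phase k s1 t))); [apply cexpi_neq0|].
    unfold L0; rewrite <- wave_sum_recentre. auto. }
  assert (Hd := is_derive_C_interval_zero _ a b x _ HL0 Hx (is_derive_C_wave_sum k h L0 x)).
  rewrite (wave_sum_recentre k s1), map_map.
  replace (map _ L) with (map (dstep k h) L0) by (unfold L0; now rewrite map_map).
  rewrite HL0, Cmult_0_r, Cplus_0_r in Hd by exact Hx.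
  rewrite Hd. apply Cmult_0_r.
Qed.

Lemma dstep_from_self s1 h P : dstep_from k s1 h (P, s1) = (tp_dstep k (0, 0) h P, s1).
Proof. unfold dstep_from; simpl. now rewrite vsub_diag. Qed.

Lemma dstep_from_Forall_zero s1 h L :
  ~ In s1 (map snd L) ->
  List.Forall (fun p => tp_zero (fst p)) (map (dstep_from k s1 h) L) ->
  List.Forall (fun p => tp_zero (fst p)) L.
Proof.
  rewrite !List.Forall_forall. intros Hs1 HL [P s] Hin. apply NNPP; intros HP.
  apply (tp_dstep_nonzero k (vsub s s1) h P Hk); auto.
  - intros E. apply Hs1. rewrite <- (vsub_eq0 _ _ E). exact (in_map snd _ _ Hin).
  - exact (HL _ (in_map (dstep_from k s1 h) _ _ Hin)).
Qed.

Lemma wave_sum_vanishes_cons_zero s1 ss :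
  ~ In s1 ss ->
  (forall L, map snd L = ss -> wave_sum_vanishes L -> List.Forall (fun p => tp_zero (fst p)) L) ->
  forall n P lo rest, tp_supported P lo n -> map snd rest = ss ->
  wave_sum_vanishes ((P, s1) :: rest) -> List.Forall (fun p => tp_zero (fst p)) ((P, s1) :: rest).
Proof.
  intros Hs1 IHss n. induction n as [|n IHn]; intros P lo rest HP Hrest Hvan.
  - assert (HP0 := tp_supported_0 P lo HP).
    constructor; [exact HP0|]. apply IHss; [exact Hrest|].
    intros x Hx. rewrite <- (Hvan x Hx). unfold wave_sum, wave; simpl.
    rewrite (tp_eval_zero P x HP0). apply injective_projections; simpl; ring.
  - set (h := (lo + Z.of_nat n)%Z).
    assert (Hstep : List.Forall (fun p => tp_zero (fst p)) (map (dstep_from k s1 h) ((P, s1) :: rest))).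
    { pose proof (wave_sum_vanishes_dstep_from s1 h _ Hvan) as Hvan'.
      cbn [map] in *. rewrite dstep_from_self in *.
      apply (IHn _ lo); [now apply tp_dstep_origin_supported | now rewrite map_map | exact Hvan']. }
    cbn [map] in Hstep. rewrite dstep_from_self in Hstep.
    apply List.Forall_cons_iff in Hstep as [Hhead Hstep].
    assert (Hrest0 : List.Forall (fun p => tp_zero (fst p)) rest).
    { apply (dstep_from_Forall_zero s1 h); [now rewrite Hrest | exact Hstep]. }
    constructor; [|exact Hrest0].
    set (x0 := (a + b) / 2).
    assert (Hx0 : a < x0 < b) by (unfold x0; lra).
    apply (tp_monomial_zero P h x0); [exact (tp_dstep_origin_zero k h P Hhead)|].
    specialize (Hvan x0 Hx0).
    unfold wave_sum in Hvan; simpl in Hvan; fold (wave_sum k rest x0) in Hvan.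
    rewrite (wave_sum_Forall_zero k rest x0 Hrest0), Cplus_0_r in Hvan.
    unfold wave in Hvan; simpl in Hvan.
    rewrite Cmult_comm in Hvan. exact (Cmult_eq0_r _ _ (cexpi_neq0 _) Hvan).
Qed.

Lemma wave_sum_vanishes_Forall_zero ss :
  NoDup ss -> forall L, map snd L = ss -> wave_sum_vanishes L ->
  List.Forall (fun p => tp_zero (fst p)) L.
Proof.
  induction ss as [|s1 ss IH]; intros Hnd L HL Hvan.
  - destruct L; [constructor | discriminate].
  - destruct L as [|[P s] rest]; [discriminate|]. injection HL as -> Hrest.
    apply NoDup_cons_iff in Hnd as [Hs1 Hnd].
    destruct (tp_supported_exists P) as (lo & n & HP).
    exact (wave_sum_vanishes_cons_zero s1 ss Hs1 (IH Hnd) n P lo rest HP Hrest Hvan).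
Qed.

End Vanishing.

Lemma Rabs_sin_le h : Rabs (sin h) <= Rabs h.
Proof.
  assert (Hpos : forall h, 0 <= h -> Rabs (sin h) <= h).
  { intros y Hy. pose proof PI2_1. pose proof (SIN_bound y).
    destruct (Req_dec y 0) as [->|Hy0]; [rewrite sin_0, Rabs_R0; lra|].
    pose proof (sin_lt_x y ltac:(lra)).
    destruct (Rle_lt_dec y PI) as [HyPI|HyPI].
    - rewrite Rabs_right by (apply Rle_ge, sin_ge_0; lra). lra.
    - apply Rabs_le. lra. }
  destruct (Rle_lt_dec 0 h) as [Hh|Hh].
  - rewrite (Rabs_right h) by lra. auto.
  - rewrite <- (Rabs_Ropp h), <- (Rabs_Ropp (sin h)), <- sin_neg, (Rabs_right (- h)) by lra.
    apply Hpos. lra.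
Qed.

Lemma vv_circle kp km t x :
  mu kp km * cos t = cos x -> sin t < 0 -> sin x < 0 -> vv kp km (cos t, sin t) = (cos x, sin x).
Proof.
  intros Hcos Ht Hx. unfold vv; cbn [fst snd]. f_equal; [exact Hcos|].
  unfold sgn. destruct (Rlt_dec 0 (sin t)); [lra|]. destruct (Rlt_dec (sin t) 0); [|lra].
  replace (1 - mu kp km ^ 2 * cos t ^ 2) with (sin x)².
  - rewrite sqrt_Rsqr_abs, Rabs_left by exact Hx. ring.
  - pose proof (sin2_cos2 x) as H. rewrite <- Hcos in H. unfold Rsqr in *. nra.
Qed.

Lemma QQ_neq0 kp km a :
  0 < mu kp km -> snd a < 0 -> snd (vv kp km a) < 0 -> QQ kp km a <> 0.
Proof.
  intros Hmu Ha Hv. unfold QQ. apply Rmult_integral_contrapositive_currified.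
  - nra.
  - apply Rinv_neq_0_compat. nra.
Qed.

Lemma Shat_acos kp km u :
  0 < kp -> 0 < km -> -1 < u < 1 -> (km < kp -> Rabs u < km / kp) ->
  Shat kp km (cos (2 * PI - acos u), sin (2 * PI - acos u)).
Proof.
  intros Hkp Hkm Hu Hcrit. exists (2 * PI - acos u). split; [|reflexivity].
  unfold theta_c. destruct (Rlt_dec km kp) as [Hlt|Hge].
  - set (w := km / kp).
    assert (Hw : 0 < w < 1).
    { unfold w; split; [apply Rdiv_lt_0_compat; lra|].
      apply Rlt_div_l; lra. }
    specialize (Hcrit Hlt); fold w in Hcrit. apply Rabs_def2 in Hcrit.
    pose proof (acos_bound u). pose proof (acos_bound w). pose proof (acos_bound (- w)).
    assert (acos w < acos u) by (apply cos_decreasing_0; try lra; rewrite !cos_acos; lra).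
    assert (acos u < acos (- w)) by (apply cos_decreasing_0; try lra; rewrite !cos_acos; lra).
    rewrite acos_opp in *. lra.
  - pose proof (acos_bound_lt u Hu). lra.
Qed.

Lemma incidence_angle kp km x :
  0 < kp -> 0 < km -> Rabs (x - 3 * (PI / 2)) < Rmin (mu kp km) 1 / 2 ->
  exists a, Shat kp km a /\ vv kp km a = (cos x, sin x) /\ QQ kp km a <> 0.
Proof.
  intros Hkp Hkm Hx.
  set (m := mu kp km) in *.
  assert (Hm : 0 < m) by (apply Rdiv_lt_0_compat; lra).
  assert (Hm_inv : m * / m = 1) by (field; lra).
  pose proof (Rmin_l m 1). pose proof (Rmin_r m 1). pose proof PI2_1.
  assert (Hcx : Rabs (cos x) < Rmin m 1 / 2).
  { replace (cos x) with (sin (x - 3 * (PI / 2)))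
      by (rewrite sin_minus, cos_3PI2, sin_3PI2; ring).
    exact (Rle_lt_trans _ _ _ (Rabs_sin_le _) Hx). }
  apply Rabs_def2 in Hx as [Hx_hi Hx_lo], Hcx as [Hcx_hi Hcx_lo].
  assert (Hsx : sin x < 0) by (apply sin_lt_0; lra).
  set (u := cos x / m).
  assert (Hum : u * m = cos x) by (unfold u; field; lra).
  assert (Hu : -1 < u < 1) by (split; nra).
  set (t := 2 * PI - acos u).
  assert (Hct : cos t = u) by (unfold t; rewrite cos_minus, cos_2PI, sin_2PI, cos_acos; lra).
  assert (Hst : sin t < 0).
  { unfold t. rewrite sin_minus, cos_2PI, sin_2PI.
    pose proof (acos_bound_lt u Hu). pose proof (sin_gt_0 (acos u)). lra. }
  assert (Hv : vv kp km (cos t, sin t) = (cos x, sin x)).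
  { apply vv_circle; auto. rewrite Hct. fold m. lra. }
  exists (cos t, sin t). split; [|split; [exact Hv|]].
  - apply Shat_acos; auto. intros _.
    replace (km / kp) with (/ m) by (unfold m, mu; field; lra).
    apply Rabs_def1; nra.
  - apply QQ_neq0; auto. now rewrite Hv.
Qed.

Definition tp_affine (c d1 d2 : C) : tpoly :=
  (0%Z, c)
  :: (1%Z, Cmult (Cminus d1 (Cmult Ci d2)) (RtoC (/ 2)))
  :: ((-1)%Z, Cmult (Cplus d1 (Cmult Ci d2)) (RtoC (/ 2))) :: nil.

Lemma tp_eval_affine c d1 d2 x :
  tp_eval (tp_affine c d1 d2) x = Cplus c (Cplus (Cmult d1 (RtoC (cos x))) (Cmult d2 (RtoC (sin x)))).
Proof.
  unfold tp_affine, tp_eval, cexpi.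
  replace (IZR 0 * x) with 0 by (simpl; ring).
  replace (IZR 1 * x) with x by (simpl; ring).
  replace (IZR (-1) * x) with (- x) by (simpl; ring).
  rewrite cos_0, sin_0, cos_neg, sin_neg.
  destruct c, d1, d2. apply injective_projections; simpl; field.
Qed.

Lemma tp_affine_zero c d1 d2 :
  tp_zero (tp_affine c d1 d2) -> c = RtoC 0 /\ d1 = RtoC 0 /\ d2 = RtoC 0.
Proof.
  intros H. pose proof (H 0%Z) as H0. pose proof (H 1%Z) as H1. pose proof (H (-1)%Z) as H2.
  simpl in H0, H1, H2.
  destruct c as [c1 c2], d1 as [p q], d2 as [r w].
  apply (f_equal fst) in H0 as H0a, H1 as H1a, H2 as H2a.
  apply (f_equal snd) in H0 as H0b, H1 as H1b, H2 as H2b.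
  simpl in *. split; [|split]; apply injective_projections; simpl; lra.
Qed.

Lemma Csum_scal M q F : Csum M (fun l => Cmult q (F l)) = Cmult q (Csum M F).
Proof.
  unfold Csum. induction (seq 0 M) as [|l ls IH]; simpl.
  - apply injective_projections; simpl; ring.
  - rewrite IH. ring.
Qed.

Lemma wave_sum_map_seq k G M x : wave_sum k (map G (seq 0 M)) x = Csum M (fun l => wave k (G l) x).
Proof. unfold wave_sum, Csum. now rewrite map_map. Qed.

Lemma combination_wave_sum kp km M s c d1 d2 a x :
  vv kp km a = (cos x, sin x) ->
  Csum M (fun l => Cplus (Cmult (c l) (g_fun kp km (s l) a))
                     (Cplus (Cmult (d1 l) (h_fun kp km (s l) 1 a))
                            (Cmult (d2 l) (h_fun kp km (s l) 2 a))))
  = Cmult (RtoC (QQ kp km a))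
      (wave_sum km (map (fun l => (tp_affine (c l) (d1 l) (d2 l), s l)) (seq 0 M)) x).
Proof.
  intros Hv. rewrite wave_sum_map_seq, <- Csum_scal. unfold Csum. f_equal. apply map_ext. intros l.
  unfold h_fun, g_fun, wave. rewrite Hv. cbn [fst snd]. rewrite tp_eval_affine.
  change (- (km * dot2 (cos x, sin x) (s l))) with (phase km (s l) x).
  unfold e_q, dot2; simpl.
  destruct (c l), (d1 l), (d2 l), (cexpi (phase km (s l) x)).
  apply injective_projections; simpl; ring.
Qed.

Lemma NoDup_map_seq {A : Type} (f : nat -> A) M :
  (forall i j, (i < M)%nat -> (j < M)%nat -> i <> j -> f i <> f j) -> NoDup (map f (seq 0 M)).
Proof.
  intros Hf. apply NoDup_map_NoDup_ForallPairs; [|apply seq_NoDup].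
  intros i j Hi Hj E. apply in_seq in Hi, Hj.
  destruct (Nat.eq_dec i j) as [|Hij]; [assumption|].
  exfalso. exact (Hf i j ltac:(lia) ltac:(lia) Hij E).
Qed.

Theorem lemmaA1 (kp km : R) (Hkp : 0 < kp) (Hkm : 0 < km)
  (M : nat) (s : nat -> R * R)
  (Hs_lower : forall l, (l < M)%nat -> snd (s l) < 0)
  (Hs_dist : forall l m, (l < M)%nat -> (m < M)%nat -> l <> m -> s l <> s m)
  (c d1 d2 : nat -> C)
  (Hcomb : forall a, Shat kp km a ->
     Csum M (fun l => Cplus (Cmult (c l) (g_fun kp km (s l) a))
                      (Cplus (Cmult (d1 l) (h_fun kp km (s l) 1 a))
                             (Cmult (d2 l) (h_fun kp km (s l) 2 a))))
     = RtoC 0) :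
  forall l, (l < M)%nat -> c l = RtoC 0 /\ d1 l = RtoC 0 /\ d2 l = RtoC 0.
Proof.
  intros l Hl.
  set (delta := Rmin (mu kp km) 1 / 2).
  assert (Hdelta : 0 < delta).
  { unfold delta, mu. apply Rdiv_lt_0_compat; [apply Rmin_pos; [apply Rdiv_lt_0_compat|]|]; lra. }
  set (L := map (fun l => (tp_affine (c l) (d1 l) (d2 l), s l)) (seq 0 M)).
  assert (Hvan : wave_sum_vanishes km (3 * (PI / 2) - delta) (3 * (PI / 2) + delta) L).
  { intros x Hx.
    destruct (incidence_angle kp km x Hkp Hkm) as (a & Ha & Hv & HQ).
    { apply Rabs_def1; unfold delta in *; lra. }
    apply (Cmult_eq0_r (RtoC (QQ kp km a))).
    - intros E. apply HQ. exact (f_equal fst E).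
    - unfold L. rewrite <- (combination_wave_sum kp km M s c d1 d2 a x Hv). exact (Hcomb a Ha). }
  assert (Hnodup : NoDup (map snd L)) by (unfold L; rewrite map_map; now apply NoDup_map_seq).
  assert (Hzero := wave_sum_vanishes_Forall_zero km (3 * (PI / 2) - delta) (3 * (PI / 2) + delta)
                     Hkm ltac:(lra) _ Hnodup L eq_refl Hvan).
  rewrite List.Forall_forall in Hzero.
  apply tp_affine_zero, (Hzero (_, s l)).
  unfold L. apply (in_map (fun l => (tp_affine (c l) (d1 l) (d2 l), s l))), in_seq. lia.
Qed.
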